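(* The generating series $g(q;x)=\sum_\gamma q^{\omega_H(\gamma)+\omega_{DU}(\gamma)}x^{n(\gamma)}$, where $\gamma$ ranges over all Grand Schröder paths and $n(\gamma)$ is the semi-length, is $$g(q;x)=\frac{1}{\sqrt{1-2(1+2q)x+(1-2q)^2x^2}}.$$
   Context: Steps: $U=(1,1)$, $D=(1,-1)$, $H=(2,0)$. A Grand Schröder path of semi-length $n$ is any lattice path from $(0,0)$ to $(2n,0)$ with steps $U,D,H$. Paths are identified with words of steps; $\omega_H(\gamma)$ is the number of $H$ steps and $\omega_{DU}(\gamma)$ the number of occurrences of the factor $DU$ in $\gamma$. *)

From HB Require Import structures.
From mathcomp Require Import all_boot all_order all_algebra.
Set Implicit Arguments. Unset Strict Implicit. Unset Printing Implicit Defensive.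
Import GRing.Theory.
Local Open Scope ring_scope.

(* Steps U=(1,1), D=(1,-1), H=(2,0). *)
Inductive step := U | D | H.

Definition step_eqb (a b : step) : bool :=
  match a, b with U, U | D, D | H, H => true | _, _ => false end.
Lemma step_eqP : Equality.axiom step_eqb.
Proof. by case; case; constructor. Qed.
HB.instance Definition _ := hasDecEq.Build step step_eqP.

Definition width (s : step) : nat := if s is H then 2 else 1.

Fixpoint words (k : nat) : seq (seq step) :=
  if k is k'.+1 then [seq s :: w | s <- [:: U; D; H], w <- words k'] else [:: [::]].

(* a word is a Grand Schroeder path of semi-length n iff it goes from (0,0)
   to (2n,0): total width 2n and final height 0 (#U = #D). *)
Definition is_grand_schroeder (n : nat) (w : seq step) : bool :=
  (sumn (map width w) == n.*2) && (count_mem U w == count_mem D w).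

(* list of all Grand Schroeder paths of semi-length n (each exactly once;
   such a path has at most 2n steps) *)
Definition grand_paths (n : nat) : seq (seq step) :=
  [seq w <- flatten [seq words k | k <- iota 0 n.*2.+1] | is_grand_schroeder n w].

Definition omegaH (w : seq step) : nat := count_mem H w.
Definition omegaDU (w : seq step) : nat :=
  count (fun p : step * step => (p.1 == D) && (p.2 == U)) (zip w (behead w)).

(* coefficient of x^n in g(q;x), as a polynomial in q *)
Definition gcoef (n : nat) : {poly int} :=
  \sum_(w <- grand_paths n) 'X^(omegaH w + omegaDU w).

(* formal power series in x with coefficients in Z[q], as coefficient functions *)
Definition series := nat -> {poly int}.
Definition series_mul (f g : series) : series :=
  fun n => \sum_(i < n.+1) f i * g (n - i)%N.
Definition series_one : series := fun n => if n == 0%N then 1 else 0.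

Definition Pser : series := fun n =>
  if n == 0%N then 1
  else if n == 1%N then - (2%:R * (1 + 2%:R * 'X))
  else if n == 2%N then (1 - 2%:R * 'X) ^+ 2
  else 0.

(* f = 1/sqrt(P) as formal power series: f is the (unique) series with
   constant term 1 whose square times P equals 1. *)
Definition is_inv_sqrt (f P : series) : Prop :=
  f 0%N = 1 /\ series_mul (series_mul f f) P = series_one.

From mathcomp Require Import all_boot all_order all_algebra.
From mathcomp Require Import ring zify.
From Stdlib Require Import FunctionalExtensionality.
Import GRing.Theory Num.Theory.

(* 1. The statistic omegaH + omegaDU of a word is computed by a left-to-right
      scan [weight], whose flag records whether the previous letter was D.
   2. Let [nwords b u d e F] count the words with u letters U, d letters D and
      e letters H whose scan (started with flag b) has weight F.  Splitting on
      the first letter gives a recurrence, solved by the closed form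
         nwords false u d e F = C(F,e) C(u+e,F) C(d+e,F).
   3. A Grand Schroeder path of semi-length n has u = d and u + e = n, so
      summing the closed form over u gives  [q^F] g_n = C(n,F)^2 2^F.
   4. A binomial identity turns this into the Legendre-type recurrence
         (n+2) g_(n+2) = (2n+3) a g_(n+1) - (n+1) b g_n,
      with a = 1+2q and b = (1-2q)^2.
   5. For any series with g_0 = 1, g_1 = a obeying this recurrence, the square
      s = g^2 satisfies s_(n+2) = 2a s_(n+1) - b s_n (compare n s_n with the
      "derivative" sum of i g_i g_(n-i)), i.e. s (1 - 2ax + bx^2) = 1. *)

Fixpoint weight (afterD : bool) (w : seq step) : nat :=
  if w is s :: w' then
    ((match s with H => 1 | U => nat_of_bool afterD | D => 0 end) + weight (s == D) w')%N
  else 0.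

Lemma omegaDU_cons s w :
  omegaDU (s :: w) = ((s == D) && (head H w == U)) + omegaDU w.
Proof. by case: w => [|t w]; rewrite /omegaDU //=; case: s; try case: t. Qed.

Lemma weight_omega_flag b w :
  weight b w = (b && (head H w == U)) + (omegaH w + omegaDU w).
Proof.
elim: w b => [|s w IH] b; first by case: b.
rewrite omegaDU_cons /= IH /omegaH /=.
by case: s; case: b; case: (head H w == U) => /=; lia.
Qed.

Lemma weight_omega w : weight false w = omegaH w + omegaDU w.
Proof. exact: weight_omega_flag. Qed.

Lemma words_S k : words k.+1 =
  [seq U :: w | w <- words k] ++ [seq D :: w | w <- words k] ++ [seq H :: w | w <- words k].
Proof. by rewrite /= cats0. Qed.

Lemma size_words k w : w \in words k -> size w = k.
Proof.
elim: k w => [|k IH] w; first by rewrite inE => /eqP ->.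
by rewrite words_S !mem_cat => /or3P [] /mapP [w' /IH <- ->].
Qed.

Lemma size_count w : size w = count_mem U w + count_mem D w + count_mem H w.
Proof.
elim: w => [|s w IH] //=; rewrite IH.
by case: s => /=; set a := count_mem U w; set b := count_mem D w; set c := count_mem H w; lia.
Qed.

Lemma count_none (T : Type) (a : pred T) s : a =1 pred0 -> count a s = 0.
Proof. by move/eq_count->; apply: count_pred0. Qed.

Definition nwords (b : bool) (u d e F : nat) : nat :=
  count (fun w => [&& count_mem U w == u, count_mem D w == d & weight b w == F])
        (words (u + d + e)).

Lemma count_words_short k u d (P : pred (seq step)) : k < u + d ->
  count (fun w => [&& count_mem U w == u, count_mem D w == d & P w]) (words k) = 0.
Proof.
move=> lt_k; apply/eqP; rewrite -leqn0 leqNgt -has_count; apply/hasPn => w /size_words.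
rewrite size_count => size_w; apply/negP => /and3P [/eqP cU /eqP cD _]; lia.
Qed.

Lemma nwords0 b F : nwords b 0 0 0 F = (F == 0).
Proof. by rewrite /nwords /= addn0 eq_sym. Qed.

Lemma nwords_rec b u d e F : 0 < u + d + e ->
  nwords b u d e F =
    (if u is u'.+1 then
       (if b then (if F is F'.+1 then nwords false u' d e F' else 0)
        else nwords false u' d e F) else 0)
  + (if d is d'.+1 then nwords true u d' e F else 0)
  + (if e is e'.+1 then (if F is F'.+1 then nwords false u d e' F' else 0) else 0).
Proof.
case Ek: (u + d + e) => [|k] // _.
rewrite {1}/nwords Ek words_S !count_cat !count_map addnA; congr (_ + _ + _).
- case: u Ek => [|u] Ek; first exact: count_none.
  rewrite /nwords (_ : u + d + e = k); last by lia.
  case: b; last exact: eq_count.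
  case: F => [|F]; last exact: eq_count.
  by apply: count_none => w /=; rewrite !andbF.
- case: d Ek => [|d] Ek; first by apply: count_none => w /=; rewrite andbF.
  by rewrite /nwords (_ : u + d + e = k); [exact: eq_count | lia].
- case: F => [|F]; first by clear Ek; case: e => [|e]; apply: count_none => w /=; rewrite !andbF.
  case: e Ek => [|e] Ek; last first.
    by rewrite /nwords (_ : u + d + e = k); [exact: eq_count | lia].
  by rewrite (@count_words_short k u d (fun w => weight false w == F)) //; lia.
Qed.

(* Starting after a D only changes the weight of an initial U; comparing the
   two first-letter decompositions relates the two flags. *)
Lemma nwords_afterD u d e F :
  nwords true u d e F + (if u is u'.+1 then nwords false u' d e F else 0) =
  nwords false u d e F +
    (if u is u'.+1 then (if F is F'.+1 then nwords false u' d e F' else 0) else 0).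
Proof.
have [sum0 | sum_gt0] := posnP (u + d + e).
  have [-> -> ->] : [/\ u = 0, d = 0 & e = 0] by split; lia.
  by rewrite !nwords0.
by rewrite !(nwords_rec _ _ _ _ _ sum_gt0); case: u {sum_gt0} => [|u]; case: F => [|F]; lia.
Qed.

Definition nformula (u d e F : nat) : nat := 'C(F, e) * 'C(u + e, F) * 'C(d + e, F).

Lemma bin_antisym a b : 'C(a, b) * 'C(b, a) = (a == b).
Proof.
case: (ltngtP a b) => h; first by rewrite bin_small.
  by rewrite (bin_small h) muln0.
by rewrite h binn.
Qed.

Lemma nformula_u0 d e F : nformula 0 d e F = (F == e) * 'C(d + e, e).
Proof. by rewrite /nformula add0n bin_antisym; case: eqP => [->|]. Qed.

Lemma nformula_d0 u e F : nformula u 0 e F = (F == e) * 'C(u + e, e).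
Proof. by rewrite /nformula add0n mulnAC bin_antisym; case: eqP => [->|]. Qed.

(* The closed form obeys the recurrence of [nwords_rec] when d = 0 ... *)
Lemma nformula_rec0 u e F : 0 < u + e ->
  nformula u 0 e F = (if u is u'.+1 then nformula u' 0 e F else 0) +
    (if e is e'.+1 then (if F is F'.+1 then nformula u 0 e' F' else 0) else 0).
Proof.
move=> h; case: u h => [|u] h; case: e h => [|e] h; case: F => [|F];
  rewrite ?nformula_d0 /= ?eqSS ?bin0 ?addn0 ?add0n ?mul1n ?mul0n ?muln0 ?muln1 //; try lia.
all: case: (F == e); rewrite ?mul0n ?mul1n ?addSn ?addnS ?binS //; try lia.
all: by rewrite bin_small.
Qed.

(* ... and when d > 0, T standing for the count with flag true, as
   constrained by [nwords_afterD]. *)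
Lemma nformula_rec u d e F T :
  T + (if u is u'.+1 then nformula u' d e F else 0) =
    nformula u d e F + (if u is u'.+1 then (if F is F'.+1 then nformula u' d e F' else 0) else 0) ->
  nformula u d.+1 e F = (if u is u'.+1 then nformula u' d.+1 e F else 0) + T +
    (if e is e'.+1 then (if F is F'.+1 then nformula u d.+1 e' F' else 0) else 0).
Proof.
case: u => [|u].
  case: e => [|e]; case: F => [|F] => hT; rewrite ?nformula_u0 /= ?eqSS ?bin0 ?addn0 ?add0n ?mul1n ?mul0n in hT *; try lia.
  rewrite hT; case: (F == e); rewrite ?mul0n ?mul1n // !addSn !addnS binS; lia.
rewrite /nformula; case: e => [|e]; case: F => [|F];
  rewrite ?addn0 ?add0n ?addSn ?addnS ?binS ?bin0 ?bin0n /=; lia.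
Qed.

Lemma nwords_closed u d e F : nwords false u d e F = nformula u d e F.
Proof.
have [n] := ubnP (u + d + e); elim: n => // n IH in u d e F *; rewrite ltnS => le_n.
have [sum0 | sum_gt0] := posnP (u + d + e).
  have [-> -> ->] : [/\ u = 0, d = 0 & e = 0] by split; lia.
  by rewrite nwords0 /nformula bin0 bin0n; case: F.
have IHs u' d' e' F' : u' + d' + e' < u + d + e ->
    nwords false u' d' e' F' = nformula u' d' e' F'.
  by move=> lt_sum; apply: IH; lia.
have stepU : (if u is u'.+1 then nwords false u' d e F else 0) =
             (if u is u'.+1 then nformula u' d e F else 0).
  by case: u {le_n} sum_gt0 IHs => // u _ IHs; apply: IHs; lia.
have stepH : (if e is e'.+1 then (if F is F'.+1 then nwords false u d e' F' else 0) else 0) =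
             (if e is e'.+1 then (if F is F'.+1 then nformula u d e' F' else 0) else 0).
  by clear stepU; case: e {le_n} sum_gt0 IHs => // e _ IHs; case: F => // F; apply: IHs; lia.
rewrite nwords_rec // stepU stepH.
case: d {le_n} sum_gt0 IHs stepU stepH => [|d] sum_gt0 IHs _ _.
  by rewrite addn0 nformula_rec0 //; lia.
symmetry; apply: nformula_rec; have := nwords_afterD u d e F.
rewrite IHs; last lia.
case: u {sum_gt0} IHs => [|u] IHs; first by rewrite !addn0.
by case: F => [|F]; rewrite !IHs //; lia.
Qed.

Lemma sum_width w : sumn (map width w) = size w + count_mem H w.
Proof. by elim: w => [|s w IH] //=; rewrite IH; case: s => /=; lia. Qed.

Lemma grand_schroederE n w : is_grand_schroeder n w =
  (count_mem U w == count_mem D w) && (size w == count_mem U w + n).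
Proof.
rewrite /is_grand_schroeder sum_width [size w]size_count -muln2.
by apply/andP/andP => -[/eqP h1 /eqP h2]; split; apply/eqP; lia.
Qed.

Definition grand_weight n F : pred (seq step) :=
  predI (fun w => weight false w == F) (is_grand_schroeder n).

Lemma count_grand_short n k F : k < n -> count (grand_weight n F) (words k) = 0.
Proof.
move=> lt_kn; apply/eqP; rewrite -leqn0 leqNgt -has_count.
apply/hasPn => w /size_words size_w; rewrite /grand_weight /= grand_schroederE size_w.
by apply/negP => /andP [_ /andP [_ /eqP]]; lia.
Qed.

Lemma count_grand_len n u F : u <= n ->
  count (grand_weight n F) (words (u + n)) = nwords false u u (n - u) F.
Proof.
move=> le_un; rewrite /nwords (_ : u + u + (n - u) = u + n); last by lia.
apply: eq_in_count => w /size_words size_w; rewrite /grand_weight /=.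
rewrite grand_schroederE size_w eqn_add2r (eq_sym u).
case: (count_mem U w =P u) => [->|_]; last by rewrite !andbF.
by rewrite andbT andbC eq_sym.
Qed.

Lemma count_grand n F : count (fun w => weight false w == F) (grand_paths n) =
  \sum_(u < n.+1) nwords false u u (n - u) F.
Proof.
rewrite /grand_paths count_filter count_flatten sumnE !big_map -/(index_iota 0 n.*2.+1).
rewrite (@big_cat_nat _ _ _ n) //=; last by rewrite -addnn; lia.
rewrite big1_seq => [|k /andP [_]]; last first.
  by rewrite mem_index_iota => /andP [_ lt_kn]; apply: count_grand_short.
rewrite add0n -{1}(add0n n) big_addn (_ : n.*2.+1 - n = n.+1); last by rewrite -addnn; lia.
by rewrite big_mkord; apply: eq_bigr => u _; rewrite count_grand_len // -ltnS.
Qed.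

Lemma sum_bin_row F m : F < m -> \sum_(e < m) 'C(F, e) = 2 ^ F.
Proof.
move=> lt_Fm; rewrite (eq_bigr (fun e : 'I_m => if e < F.+1 then 'C(F, e) else 0)).
  rewrite -big_mkcond -big_ord_widen // -[2]/(1 + 1) expnDn.
  by apply: eq_bigr => e _; rewrite !exp1n !muln1.
by move=> e _; case: ltnP => // /bin_small.
Qed.

Lemma count_grand_weight n F :
  count (fun w => weight false w == F) (grand_paths n) = 'C(n, F) ^ 2 * 2 ^ F.
Proof.
rewrite count_grand (eq_bigr (fun u : 'I_n.+1 => 'C(F, n - u) * 'C(n, F) ^ 2)); last first.
  move=> u _; rewrite nwords_closed /nformula subnKC -?mulnA //.
  by rewrite -ltnS.
rewrite -big_distrl /= (reindex_inj rev_ord_inj) /=.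
rewrite (eq_bigr (fun u : 'I_n.+1 => 'C(F, u))) => [|u _]; last by rewrite subSS subKn // -ltnS.
case: (leqP F n) => le_Fn; first by rewrite sum_bin_row // mulnC.
by rewrite bin_small // exp0n // muln0.
Qed.

(* The identity behind the three-term recurrence of sum_k C(n,k)^2 t^k. *)
Lemma bin_square_rec n j :
  (n + 2) * ('C(n, j.+2) * 'C(n, j)) + 'C(n, j.+2) * 'C(n, j.+1) + 'C(n, j.+1) * 'C(n, j)
  = n * ('C(n, j.+1) * 'C(n, j.+1)).
Proof.
have [le_nj | lt_jn] := leqP n j.
  by rewrite (@bin_small n j.+1) ?(@bin_small n j.+2) ?muln0 ?mul0n //; lia.
have [N ->] : exists N, n = N + j.+1 by exists (n - j.+1); lia.
have left1 := mul_bin_left (N + j.+1) j.+1.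
have left0 := mul_bin_left (N + j.+1) j.
rewrite addnK in left1; rewrite (_ : N + j.+1 - j = N.+1) in left0; last by lia.
move: left1 left0; set x := 'C(_, j.+2); set y := 'C(_, j.+1); set z := 'C(_, j).
move=> left1 left0; apply/eqP; rewrite -(eqn_pmul2l (_ : 0 < j.+2 * N.+1)) //; apply/eqP.
transitivity ((N + j.+1 + 2) * ((j.+2 * x) * (N.+1 * z)) + N.+1 * y * (j.+2 * x)
   + j.+2 * y * (N.+1 * z)); first by ring.
by rewrite left1 -left0; ring.
Qed.

Local Open Scope ring_scope.

Lemma coef_gcoef n F : (gcoef n)`_F = ('C(n, F) ^ 2 * 2 ^ F)%N%:R.
Proof.
rewrite /gcoef coef_sum -count_grand_weight -sum1_count natr_sum [RHS]big_mkcond /=.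
by apply: eq_bigr => w _; rewrite coefXn weight_omega eq_sym; case: eqP.
Qed.

(* The coefficients of 1 - 2 pa x + pb x^2 in powers of x. *)
Definition pa : {poly int} := 1 + 2%:R * 'X.
Definition pb : {poly int} := (1 - 2%:R * 'X) ^+ 2.

Lemma coef_pa p k : (pa * p)`_k = p`_k + (if k is k'.+1 then 2 * p`_k' else 0).
Proof.
rewrite /pa mulrDl mul1r -mulrA coefD mulr_natl coefMn coefXM.
by case: k => [|k] //=; rewrite ?mul0rn ?addr0 // mulr_natl.
Qed.

Lemma coef_pb p k : (pb * p)`_k = p`_k - (if k is k'.+1 then 4 * p`_k' else 0)
   + (if k is k'.+2 then 4 * p`_k' else 0).
Proof.
have -> : pb * p = p - 4%:R * ('X * p) + 4%:R * ('X * ('X * p)) by rewrite /pb; ring.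
rewrite coefD coefB !mulr_natl !coefMn !coefXM.
by case: k => [|[|k]] /=; rewrite ?mul0rn ?subr0 ?addr0 ?coefXM //= !mulr_natl.
Qed.

Lemma bin_square_series_rec {p : nat -> {poly int}} :
  (forall n F, (p n)`_F = ('C(n, F) ^ 2 * 2 ^ F)%N%:R) ->
  forall n, n.+2%:R * p n.+2 =
    (2 * n + 3)%N%:R * (pa * p n.+1) - n.+1%:R * (pb * p n).
Proof.
move=> coef_p n; apply/polyP => k.
rewrite coefB !mulr_natl !coefMn coef_pa coef_pb.
case: k => [|[|j]]; rewrite !coef_p.
- by rewrite ?bin0 ?expn0 ?muln1 ?subr0 ?addr0; ring.
- by rewrite ?bin1 ?bin0 ?expn0 ?expn1 ?muln1; ring.
have := bin_square_rec n j; rewrite !binS !expnS.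
set x := 'C(n, j.+2); set y := 'C(n, j.+1); set z := 'C(n, j); set t := (2 ^ j)%N.
move=> /(congr1 (fun m : nat => m%:R * (8 * t%:R) : int)) /= /eqP.
rewrite -subr_eq0 => /eqP scaled.
by apply/eqP; rewrite -subr_eq0 -scaled; apply/eqP; ring.
Qed.

Lemma gcoef0 : gcoef 0 = 1.
Proof. by apply/polyP => k; rewrite coef_gcoef coef1; case: k. Qed.

Lemma gcoef1 : gcoef 1 = pa.
Proof.
apply/polyP => k; rewrite coef_gcoef -[pa]mulr1 coef_pa coef1.
case: k => [|[|k]] /=; rewrite ?coef1 /=.
- by rewrite addr0.
- by rewrite add0r mulr1.
- by rewrite bin_small.
Qed.

Lemma natmul_poly_inj (m : nat) (p q : {poly int}) : m.+1%:R * p = m.+1%:R * q -> p = q.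
Proof. by apply: mulfI; rewrite -polyC_natr polyC_eq0 pnatr_eq0. Qed.

Definition quad_series (a b : {poly int}) : series := fun n =>
  if n == 0%N then 1 else if n == 1%N then - (2%:R * a) else if n == 2%N then b else 0.

Lemma quad_series_high a b k : (2 < k)%N -> quad_series a b k = 0.
Proof. by case: k => [|[|[|k]]]. Qed.

Section SquareOfRecurrentSeries.

Variables (a b : {poly int}) (g : series).
Hypothesis g0 : g 0 = 1.
Hypothesis g1 : g 1 = a.
Hypothesis g_rec : forall n, n.+2%:R * g n.+2 =
  (2 * n + 3)%N%:R * (a * g n.+1) - n.+1%:R * (b * g n).

(* The square of g, and the coefficients of g' g (up to the shift by x). *)
Let sq := series_mul g g.
Let moment n := \sum_(i < n.+1) i%:R * (g i * g (n - i)%N).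

(* By the symmetry i <-> n - i, (x g^2)' = 2 x g' g. *)
Lemma moment_sym n : n%:R * sq n = 2%:R * moment n.
Proof.
have rev : moment n = \sum_(i < n.+1) (n - i)%N%:R * (g i * g (n - i)%N).
  rewrite /moment (reindex_inj rev_ord_inj) /=; apply: eq_bigr => i _.
  by rewrite subSS subKn ?[g (n - i)%N * _]mulrC // -ltnS.
have -> : 2%:R * moment n = moment n + moment n by ring.
rewrite {2}rev -big_split /sq /series_mul mulr_sumr.
apply: eq_bigr => i _ /=; rewrite -mulrDl -natrD subnKC // -ltnS //.
Qed.

Lemma moment_S n : moment n.+1 = \sum_(j < n.+1) j.+1%:R * (g j.+1 * g (n - j)%N).
Proof. by rewrite /moment big_ord_recl mul0r add0r. Qed.

Lemma sq_S n : sq n.+1 = g n.+1 + \sum_(j < n.+1) g j.+1 * g (n - j)%N.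
Proof. by rewrite /sq /series_mul big_ord_recl g0 mul1r subn0. Qed.

(* The recurrence of g, summed against g, yields a recurrence for the moments. *)
Lemma moment_rec n : moment n.+2 = a * (2%:R * moment n.+1 + sq n.+1) - b * (moment n + sq n).
Proof.
rewrite sq_S [moment n.+1]moment_S moment_S big_ord_recl /= g1 subn0 mul1r.
rewrite /moment /sq /series_mul.
have termwise : forall j : 'I_n.+1,
    (bump 0 j).+1%:R * (g (bump 0 j).+1 * g (n.+1 - bump 0 j)%N) =
    a * (2%:R * (j.+1%:R * (g j.+1 * g (n - j)%N)) + g j.+1 * g (n - j)%N)
    - b * (j%:R * (g j * g (n - j)%N) + g j * g (n - j)%N).
  by move=> j; rewrite /bump /= add1n subSS mulrA g_rec; ring.
rewrite (eq_bigr _ (fun j _ => termwise j)) sumrB -!mulr_sumr !big_split /= -mulr_sumr.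
ring.
Qed.

Lemma sq_rec n : sq n.+2 = 2%:R * a * sq n.+1 - b * sq n.
Proof.
apply: (@natmul_poly_inj n.+1); rewrite moment_sym moment_rec.
have -> : 2%:R * (a * (2%:R * moment n.+1 + sq n.+1) - b * (moment n + sq n)) =
  a * (2%:R * (2%:R * moment n.+1) + 2%:R * sq n.+1) - b * (2%:R * moment n + 2%:R * sq n).
  by ring.
by rewrite -!moment_sym; ring.
Qed.

Lemma sq0 : sq 0 = 1.
Proof. by rewrite /sq /series_mul big_ord1 /= g0 mulr1. Qed.

Lemma sq1 : sq 1 = 2%:R * a.
Proof. by rewrite /sq /series_mul !big_ord_recr big_ord0 /= g0 g1; ring. Qed.

Lemma inv_sqrt_of_rec : is_inv_sqrt g (quad_series a b).
Proof.
split=> //; apply: functional_extensionality => n; rewrite /series_one.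
rewrite -/sq /series_mul.
case: n => [|[|m]].
- by rewrite big_ord1 /= sq0 mulr1.
- by rewrite !big_ord_recr big_ord0 /= sq0 sq1 /quad_series /=; ring.
rewrite !big_ord_recr /= big1 => [|i _]; last first.
  by rewrite quad_series_high ?mulr0 //=; have := ltn_ord i; lia.
have -> : (m.+2 - m = 2)%N by lia.
have -> : (m.+2 - m.+1 = 1)%N by lia.
by rewrite subnn sq_rec /quad_series /=; ring.
Qed.

End SquareOfRecurrentSeries.

Theorem mainTheorem14 : is_inv_sqrt gcoef Pser.
Proof.
have gcoef_rec := bin_square_series_rec coef_gcoef.
exact: (inv_sqrt_of_rec pa pb gcoef gcoef0 gcoef1 gcoef_rec).
Qed.
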